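(* Let $A_N^*$ be the event of Lemma 2.2 (an event in $\mathcal F^+_{\tau_N}$ with $\mathbb P[(A_N^* )^c]=O(N^{-1/8})$ on which $\sup_{x\ge0}|G_N(x)-G(x)|\le\varepsilon_N$ for a deterministic $\varepsilon_N=O(N^{-1/6})$). Suppose $G$ satisfies Assumption 2. If $b<\infty$, then there is a deterministic sequence $r_N\to0$ such that on $A_N^*$, $\sup_{0\le u\le1}|G_N^{-1}(u)-G^{-1}(u)|\le r_N$. If $b=\infty$, then there exist $\alpha>0$, deterministic $x_N$ with $N^{-\alpha}x_N$ bounded below as $N\to\infty$, and deterministic $r_N\to0$ such that on $A_N^*$, $\sup_{u:\,G^{-1}(u)\le x_N}|G_N^{-1}(u)-G^{-1}(u)|\le r_N$.
   Context: Assumption 2: the probability distribution function $G$ on $(0,\infty)$ is non-lattice with finite second moment; its support is an open interval $(a,b)$ ($0\le a<b\le\infty$), and $G(A)\ge\int_Ag(x)\,dx$ for all $A\subset(a,b)$ for some continuous positive density $g$ on $(a,b)$; if $b=\infty$ then also $g(x)\ge kx^{-\gamma}$ for all $x\ge x_0$, for some $x_0>a$, $k>0$, $\gamma>3$. $G_N$ is a (random) distribution function (in the paper: the empirical distribution of the points of the reproduction point processes of the individuals not yet infected at time $\tau_N$, measurable w.r.t. the $\sigma$-field $\mathcal F^+_{\tau_N}$). $G^{-1}$, $G_N^{-1}$ denote generalized inverses. *)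

From Stdlib Require Import Reals.
Open Scope R_scope.

Definition distribution_function (F : R -> R) : Prop :=
  (forall x y, x <= y -> F x <= F y) /\
  (forall x eps, 0 < eps -> exists delta, 0 < delta /\
       forall y, x <= y < x + delta -> Rabs (F y - F x) < eps) /\
  (forall eps, 0 < eps -> exists M, forall x, x <= M -> F x < eps) /\
  (forall eps, 0 < eps -> exists M, forall x, M <= x -> 1 - eps < F x).

Definition distribution_on_pos (F : R -> R) : Prop :=
  distribution_function F /\ forall x, x <= 0 -> F x = 0.

(* Lattice (arithmetic) distribution: all mass on d*Z for some span d > 0,
   i.e. every interval (x, y] missing d*Z carries no mass. *)
Definition lattice (F : R -> R) : Prop :=
  exists d, 0 < d /\
    forall x y, x <= y ->
      (forall k : Z, ~ (x < IZR k * d <= y)) -> F y = F x.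

Definition non_lattice (F : R -> R) : Prop := ~ lattice F.

(* Finite second moment: E[X^2] = 2 * int_0^oo x (1 - F x) dx < oo. *)
Definition finite_second_moment (F : R -> R) : Prop :=
  exists M, forall y, 0 <= y ->
    exists pr : Riemann_integrable (fun x => x * (1 - F x)) 0 y,
      RiemannInt pr <= M.

(* Assumption 2.  [b = None] encodes b = infinity. *)
Definition Assumption2 (G : R -> R) (a : R) (b : option R) : Prop :=
  distribution_on_pos G /\ non_lattice G /\ finite_second_moment G /\
  0 <= a /\
  (forall x, x <= a -> G x = 0) /\
  (match b with
   | Some b' => a < b' /\ forall x, b' <= x -> G x = 1
   | None => True
   end) /\
  exists g : R -> R,
    (forall x, a < x -> (match b with Some b' => x < b' | None => True end) ->
        0 < g x /\ continuity_pt g x) /\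
    (* G(A) >= int_A g on (a,b), tested on intervals (x,y] inside (a,b) *)
    (forall x y, a < x -> x <= y ->
        (match b with Some b' => y < b' | None => True end) ->
        exists pr : Riemann_integrable g x y, RiemannInt pr <= G y - G x) /\
    (match b with
     | Some _ => True
     | None => exists x0 k gamma, a < x0 /\ 0 < k /\ 3 < gamma /\
                 forall x, x0 <= x -> k * Rpower x (- gamma) <= g x
     end).

(* x is the generalized inverse F^{-1}(u) = inf { y >= 0 | F y >= u }
   (the infimum exists iff this relation has a solution). *)
Definition is_ginv (F : R -> R) (u x : R) : Prop :=
  (forall y, 0 <= y -> u <= F y -> x <= y) /\
  (forall x', (forall y, 0 <= y -> u <= F y -> x' <= y) -> x' <= x).

(* A realisation of G_N on the event A_N^*: a distribution function with
   support inside [a,b] (the points of the reproduction processes have law G)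
   and sup_{x >= 0} |G_N x - G x| <= eps_N. *)
Definition on_event (G H : R -> R) (a : R) (b : option R) (epsN : R) : Prop :=
  distribution_function H /\
  (forall x, x <= a -> H x = 0) /\
  (match b with Some b' => forall x, b' <= x -> H x = 1 | None => True end) /\
  (forall x, 0 <= x -> Rabs (H x - G x) <= epsN).

From Stdlib Require Import Reals.
Open Scope R_scope.
From Stdlib Require Import Lra Lia Classical ClassicalEpsilon.

(* If H is eps-close to G in sup norm and every increment of G over a step
   of length d/2 exceeds eps on the relevant range, then the generalized
   inverses of H and G differ by at most d there (ginv_lower, ginv_upper).
   The density lower bound of Assumption 2 makes G strictly increasing on
   (a,b), hence, by a compactness argument, its d/2-increments are bounded
   below by some m(d) > 0 on every bounded range; when b = infinity the
   polynomial tail bound g x >= k x^(-gamma) controls the increments up to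
   x_N = N^alpha + 1 with alpha = 1/(12 gamma), which still dominate
   eps_N = O(N^(-1/6)).  For each mesh d_j = 1/(j+1) the required increment
   condition therefore holds for all large N; picking, for each N, the
   finest mesh index j <= N for which it holds (last_index) yields a rate
   r_N = d_j tending to 0.  The two cases b < infinity and b = infinity are
   proved separately and combined in corollary2p3. *)

Definition eventually (P : nat -> Prop) : Prop :=
  exists N0, forall N, (N0 <= N)%nat -> P N.

Definition step (j : nat) : R := / (INR j + 1).

Lemma step_pos j : 0 < step j.
Proof. unfold step. apply Rinv_0_lt_compat. assert (0 <= INR j) by apply pos_INR. lra. Qed.

Lemma step_le_1 j : step j <= 1.
Proof.
  unfold step. assert (0 <= INR j) by apply pos_INR. rewrite <- Rinv_1.
  apply Rinv_le_contravar; lra.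
Qed.

Lemma Rabs_le_inv x e : Rabs x <= e -> - e <= x <= e.
Proof. unfold Rabs; destruct (Rcase_abs x); intros; lra. Qed.

Lemma ginv_nonneg F u y : is_ginv F u y -> 0 <= y.
Proof. intros [_ H]. apply H. intros; assumption. Qed.

Lemma ginv_approach F u y d : is_ginv F u y -> 0 < d ->
  exists w, 0 <= w /\ u <= F w /\ y <= w < y + d.
Proof.
  intros [H1 H2] Hd. apply NNPP; intro Hn.
  assert (y + d <= y); [|lra].
  apply H2. intros w Hw Hu.
  destruct (Rlt_le_dec w (y + d)) as [Hl|]; [|assumption].
  exfalso; apply Hn; exists w; repeat split; auto.
Qed.

Lemma ginv_between F u lo w : 0 <= w -> u <= F w ->
  (forall v, 0 <= v -> u <= F v -> lo <= v) ->
  exists z, is_ginv F u z /\ lo <= z <= w.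
Proof.
  intros Hw Huw Hlo.
  set (E := fun t => exists v, 0 <= v /\ u <= F v /\ t = - v).
  assert (Hb : bound E) by (exists 0; intros t [v [Hv [_ ->]]]; lra).
  assert (Hne : exists t, E t) by (exists (- w); exists w; auto).
  destruct (completeness E Hb Hne) as [s [Hs1 Hs2]].
  assert (Hz : is_ginv F u (- s)).
  { split.
    - intros v Hv Hu. assert (- v <= s) by (apply Hs1; exists v; auto). lra.
    - intros x' Hx'. assert (s <= - x'); [|lra].
      apply Hs2. intros t [v [Hv [Hu ->]]]. assert (x' <= v) by auto. lra. }
  exists (- s). split; [exact Hz|]. split.
  - apply (proj2 Hz). exact Hlo.
  - apply (proj1 Hz); assumption.
Qed.

Lemma ginv_at_zero F y : (forall x, 0 <= x -> 0 <= F x) ->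
  (is_ginv F 0 y <-> y = 0).
Proof.
  intros HF. split.
  - intros Hy. assert (0 <= y) by (eapply ginv_nonneg; eauto).
    assert (y <= 0) by (apply (proj1 Hy); [lra | apply HF; lra]). lra.
  - intros ->. split; [intros; assumption|].
    intros x' Hx'. apply Hx'; [lra | apply HF; lra].
Qed.

Lemma vanishing_mono_nonneg (F : R -> R) a : 0 <= a ->
  (forall x y, x <= y -> F x <= F y) -> (forall x, x <= a -> F x = 0) ->
  forall x, 0 <= x -> 0 <= F x.
Proof.
  intros Ha Fm Fz x Hx. destruct (Rle_lt_dec x a).
  - rewrite Fz; [lra | assumption].
  - rewrite <- (Fz a) by lra. apply Fm; lra.
Qed.

Lemma integral_lower_bound (g G : R -> R) p q c0 : p <= q ->
  (forall t, p < t < q -> c0 <= g t) ->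
  (exists pr : Riemann_integrable g p q, RiemannInt pr <= G q - G p) ->
  c0 * (q - p) <= G q - G p.
Proof.
  intros Hpq Hc [pr Hpr].
  rewrite <- (RiemannInt_P15 (RiemannInt_P14 p q c0)).
  eapply Rle_trans; [apply (RiemannInt_P19 (RiemannInt_P14 p q c0) pr Hpq) | exact Hpr].
  intros; unfold fct_cte; auto.
Qed.

Lemma continuous_half_bound g c : continuity_pt g c -> 0 < g c ->
  exists eta, 0 < eta /\ forall t, Rabs (t - c) < eta -> g c / 2 <= g t.
Proof.
  intros Hc Hp.
  destruct (Hc (g c / 2)) as [alp [Ha Hal]]; [lra|].
  exists alp; split; [assumption|]. intros t Ht.
  destruct (Req_dec t c) as [->|Hne]; [lra|].
  assert (Hgt : Rabs (g t - g c) < g c / 2).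
  { apply (Hal t). split; [split; [exact I | auto] | exact Ht]. }
  apply Rabs_def2 in Hgt. lra.
Qed.

Lemma density_strict_increase (G g : R -> R) a (P : R -> Prop) :
  (forall x y, x <= y -> G x <= G y) ->
  (forall x, a < x -> P x -> 0 < g x /\ continuity_pt g x) ->
  (forall x y, a < x -> x <= y -> P y ->
     exists pr : Riemann_integrable g x y, RiemannInt pr <= G y - G x) ->
  forall x y, a < x -> x < y -> (forall z, z < y -> P z) -> G x < G y.
Proof.
  intros Gm Hg Hdom x y Hax Hxy HP.
  set (c := (x + y) / 2).
  destruct (Hg c ltac:(unfold c; lra) (HP c ltac:(unfold c; lra))) as [gp gc].
  destruct (continuous_half_bound g c gc gp) as [eta [He Heta]].
  set (e := Rmin (eta / 2) ((y - x) / 4)).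
  assert (e1 : e <= eta / 2) by apply Rmin_l.
  assert (e2 : e <= (y - x) / 4) by apply Rmin_r.
  assert (e0 : 0 < e) by (apply Rmin_glb_lt; lra).
  assert (Hmass : g c / 2 * (c + e - (c - e)) <= G (c + e) - G (c - e)).
  { apply (integral_lower_bound g G); [lra | |].
    - intros t Ht. apply Heta. apply Rabs_def1; lra.
    - apply Hdom; unfold c in *; try lra. apply HP. lra. }
  assert (0 < g c / 2 * (c + e - (c - e))) by (apply Rmult_lt_0_compat; lra).
  assert (G x <= G (c - e)) by (apply Gm; unfold c in *; lra).
  assert (G (c + e) <= G y) by (apply Gm; unfold c in *; lra).
  lra.
Qed.

Lemma uniform_increase (G : R -> R) a B :
  (forall x y, x <= y -> G x <= G y) ->
  (forall x y, a < x -> x < y -> y <= B -> G x < G y) ->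
  forall h, 0 < h -> exists m, 0 < m /\
    forall p, a < p -> p + h <= B -> m <= G (p + h) - G p.
Proof.
  intros Gm Gs h hp.
  (* Induction on the number n of half-steps covering the starting points. *)
  assert (Hn : forall n : nat, exists m, 0 < m /\
     forall p, a < p < a + INR n * (h / 2) -> p + h <= B -> m <= G (p + h) - G p).
  { induction n as [|n [m [m0 Hm]]].
    - exists 1; split; [lra|]. intros p Hp. simpl in Hp. lra.
    - set (c := a + INR n * (h / 2)).
      assert (0 <= INR n) by apply pos_INR.
      assert (c >= a) by (unfold c; nra).
      destruct (Rle_lt_dec (c + h) B) as [Hc|Hc].
      + exists (Rmin m (G (c + h) - G (c + h / 2))). split.
        { apply Rmin_glb_lt; [assumption|].
          assert (G (c + h / 2) < G (c + h)) by (apply Gs; lra). lra. }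
        intros p Hp HpB. rewrite S_INR in Hp.
        destruct (Rlt_le_dec p c) as [Hpc|Hpc].
        * eapply Rle_trans; [apply Rmin_l|]. apply Hm; [unfold c in Hpc; lra | assumption].
        * eapply Rle_trans; [apply Rmin_r|].
          assert (G (c + h) <= G (p + h)) by (apply Gm; lra).
          assert (G p <= G (c + h / 2)) by (apply Gm; unfold c in *; lra). lra.
      + exists m; split; [assumption|]. intros p Hp HpB. rewrite S_INR in Hp.
        destruct (Rlt_le_dec p c) as [Hpc|Hpc].
        * apply Hm; [unfold c in Hpc; lra | assumption].
        * lra. }
  destruct (INR_archimed (h / 2) (B - a)) as [n Hn']; [lra|].
  destruct (Hn n) as [m [m0 Hm]]. exists m; split; [assumption|].
  intros p Hp HpB. apply Hm; [lra | assumption].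
Qed.

Lemma rpower_antitone s t gam : 0 < s -> s <= t -> 0 < gam ->
  Rpower t (- gam) <= Rpower s (- gam).
Proof.
  intros Hs Hst Hg. rewrite !Rpower_Ropp.
  assert (0 < Rpower s gam) by (unfold Rpower; apply exp_pos).
  apply Rinv_le_contravar; [assumption|].
  apply Rle_Rpower_l; lra.
Qed.

Lemma power_tail_increment (G g : R -> R) x0 k gam p h X :
  0 < x0 -> 0 < k -> 0 < gam ->
  (forall x, x0 <= x -> k * Rpower x (- gam) <= g x) ->
  (exists pr : Riemann_integrable g p (p + h), RiemannInt pr <= G (p + h) - G p) ->
  x0 <= p -> 0 <= h -> p + h <= X ->
  k * Rpower X (- gam) * h <= G (p + h) - G p.
Proof.
  intros Hx0 Hk Hgam Hg Hdom Hp Hh HX.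
  assert (Hbound : k * Rpower (p + h) (- gam) * (p + h - p) <= G (p + h) - G p).
  { apply (integral_lower_bound g G); [lra | | exact Hdom].
    intros t Ht. eapply Rle_trans; [|apply Hg; lra].
    apply Rmult_le_compat_l; [lra|]. apply rpower_antitone; lra. }
  replace (p + h - p) with h in Hbound by ring.
  eapply Rle_trans; [|exact Hbound].
  apply Rmult_le_compat_r; [lra|]. apply Rmult_le_compat_l; [lra|].
  apply rpower_antitone; lra.
Qed.

Definition increment_exceeds (G : R -> R) (a X h e : R) : Prop :=
  forall p, a < p -> p + h <= X -> e < G (p + h) - G p.

Section InverseComparison.
Variables (G H : R -> R) (a e : R).
Hypothesis G_mono : forall x y, x <= y -> G x <= G y.
Hypothesis G_zero : forall x, x <= a -> G x = 0.
Hypothesis H_zero : forall x, x <= a -> H x = 0.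
Hypothesis H_close : forall x, 0 <= x -> Rabs (H x - G x) <= e.

Lemma ginv_upper u y d X : 0 < u -> is_ginv G u y -> 0 < d ->
  increment_exceeds G a X (d / 2) e -> y + d <= X -> u <= H (y + d).
Proof.
  intros Hu Hy Hd Hinc HX.
  destruct (ginv_approach G u y (d / 2) Hy) as [w [Hw [Huw Hwy]]]; [lra|].
  assert (Haw : a < w).
  { destruct (Rle_lt_dec w a) as [Hl|]; [|assumption]. rewrite G_zero in Huw; lra. }
  assert (Hm := Hinc w Haw ltac:(lra)).
  assert (G (w + d / 2) <= G (y + d)) by (apply G_mono; lra).
  assert (0 <= y) by (eapply ginv_nonneg; eauto).
  assert (Hc := H_close (y + d) ltac:(lra)). apply Rabs_le_inv in Hc. lra.
Qed.

Lemma ginv_lower u y d X : 0 < u -> is_ginv G u y -> 0 < d ->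
  increment_exceeds G a X (d / 2) e -> y <= X ->
  forall w, 0 <= w -> u <= H w -> y - d <= w.
Proof.
  intros Hu Hy Hd Hinc HX w Hw Huw.
  destruct (Rle_lt_dec (y - d) w) as [|Hl]; [assumption|]. exfalso.
  assert (Haw : a < w).
  { destruct (Rle_lt_dec w a) as [Hl'|]; [|assumption]. rewrite H_zero in Huw; lra. }
  assert (Gq : G (w + d / 2) < u).
  { destruct (Rlt_le_dec (G (w + d / 2)) u) as [|Hge]; [assumption|].
    assert (y <= w + d / 2) by (apply (proj1 Hy); [lra | assumption]). lra. }
  assert (Hm := Hinc w Haw ltac:(lra)).
  assert (Hc := H_close w Hw). apply Rabs_le_inv in Hc. lra.
Qed.

Lemma ginv_close u y d X w : 0 < u -> is_ginv G u y -> 0 < d ->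
  increment_exceeds G a X (d / 2) e -> y <= X ->
  0 <= w -> u <= H w -> w <= y + d ->
  exists z, is_ginv H u z /\ Rabs (z - y) <= d.
Proof.
  intros Hu Hy Hd Hinc HX Hw Huw Hwy.
  destruct (ginv_between H u (y - d) w Hw Huw) as [z [Hz Hzw]].
  { exact (ginv_lower u y d X Hu Hy Hd Hinc HX). }
  exists z. split; [exact Hz|]. apply Rabs_le; lra.
Qed.

End InverseComparison.

Lemma eventually_power_small C s K : 0 < s -> 0 < K ->
  eventually (fun N => C * Rpower (INR N) (- s) < K).
Proof.
  intros Hs HK.
  assert (Hpos : forall N : nat, 0 < Rpower (INR N) s) by (intros; unfold Rpower; apply exp_pos).
  destruct (Rle_lt_dec C 0) as [HC|HC].
  { exists O. intros N _. rewrite Rpower_Ropp.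
    assert (0 < / Rpower (INR N) s) by (apply Rinv_0_lt_compat, Hpos). nra. }
  (* Beyond M = (C/K + 1)^(1/s) one has N^s > C/K + 1. *)
  set (M := Rpower (C / K + 1) (/ s)).
  assert (HM : 0 < M) by (unfold M, Rpower; apply exp_pos).
  destruct (INR_archimed 1 M) as [n Hn]; [lra|]. rewrite Rmult_1_r in Hn.
  exists n. intros N HN.
  assert (INR n <= INR N) by (apply le_INR; exact HN).
  assert (HMs : Rpower M s = C / K + 1).
  { unfold M. rewrite Rpower_mult, Rinv_l, Rpower_1; [reflexivity | |lra].
    assert (0 < C / K) by (apply Rdiv_lt_0_compat; lra). lra. }
  assert (HNs : C / K + 1 < Rpower (INR N) s).
  { rewrite <- HMs. apply Rlt_Rpower_l; lra. }
  rewrite Rpower_Ropp.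
  apply (Rmult_lt_reg_r (Rpower (INR N) s)); [apply Hpos|].
  rewrite Rmult_assoc, Rinv_l by (apply Rgt_not_eq, Hpos).
  assert (K * (C / K + 1) = C + K) by (field; lra). nra.
Qed.

(* With alpha = 1/(12 gamma), the rate N^(-1/6) is eventually dominated by
   any positive multiple of (N^alpha + 1)^(-gamma) >= 2^(-gamma) N^(-1/12). *)
Lemma power_decay_dominates C K gam : 0 < K -> 0 < gam ->
  eventually (fun N => C * Rpower (INR N) (- (1 / 6))
                       < K * Rpower (Rpower (INR N) (1 / (12 * gam)) + 1) (- gam)).
Proof.
  intros HK Hg.
  set (K' := K * Rpower 2 (- gam)).
  assert (HK' : 0 < K') by (unfold K', Rpower; apply Rmult_lt_0_compat; [lra | apply exp_pos]).
  destruct (eventually_power_small C (1 / 12) K' ltac:(lra) HK') as [N1 HN1].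
  exists (Nat.max N1 1). intros N HN. specialize (HN1 N ltac:(lia)).
  assert (HN0 : 1 <= INR N) by (apply (le_INR 1); lia).
  set (A := Rpower (INR N) (1 / (12 * gam))).
  assert (HA : 1 <= A).
  { assert (H0 : Rpower (INR N) 0 <= A).
    { apply Rle_Rpower; [lra|]. apply Rlt_le, Rdiv_lt_0_compat; lra. }
    rewrite Rpower_O in H0 by lra. exact H0. }
  assert (Hlow : K' * Rpower (INR N) (- (1 / 12)) <= K * Rpower (A + 1) (- gam)).
  { assert (H2A : Rpower (2 * A) (- gam) <= Rpower (A + 1) (- gam))
      by (apply rpower_antitone; lra).
    rewrite <- Rpower_mult_distr in H2A by lra.
    assert (HApow : Rpower A (- gam) = Rpower (INR N) (- (1 / 12))).
    { unfold A. rewrite Rpower_mult. f_equal. field. lra. }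
    rewrite HApow in H2A.
    unfold K'. rewrite Rmult_assoc. apply Rmult_le_compat_l; lra. }
  assert (Hsplit : Rpower (INR N) (- (1 / 6))
                   = Rpower (INR N) (- (1 / 12)) * Rpower (INR N) (- (1 / 12))).
  { rewrite <- Rpower_plus. f_equal. field. }
  assert (Hp : 0 < Rpower (INR N) (- (1 / 12))) by (unfold Rpower; apply exp_pos).
  rewrite Hsplit, <- Rmult_assoc. fold A.
  eapply Rlt_le_trans; [|exact Hlow].
  apply Rmult_lt_compat_r; assumption.
Qed.

Fixpoint last_index (P : nat -> Prop) (n : nat) : option nat :=
  match n with
  | O => if excluded_middle_informative (P O) then Some O else None
  | S k => if excluded_middle_informative (P (S k)) then Some (S k) else last_index P k
  end.

Lemma last_index_sound P n j : last_index P n = Some j -> P j.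
Proof.
  induction n as [|n IHn]; simpl.
  - destruct (excluded_middle_informative (P O)); intros Hb; inversion Hb; subst; assumption.
  - destruct (excluded_middle_informative (P (S n))); intros Hb.
    + inversion Hb; subst; assumption.
    + exact (IHn Hb).
Qed.

Lemma last_index_max P n j : P j -> (j <= n)%nat ->
  exists j', last_index P n = Some j' /\ (j <= j')%nat.
Proof.
  intros Hj. induction n as [|n IHn]; intros Hjn; simpl.
  - assert (j = O) by lia. subst.
    destruct (excluded_middle_informative (P O)) as [|Hn]; [eauto | contradiction].
  - destruct (excluded_middle_informative (P (S n))).
    + exists (S n); auto.
    + destruct (Nat.eq_dec j (S n)) as [->|]; [contradiction|].
      apply IHn; lia.
Qed.

Definition selected_rate (P : nat -> nat -> Prop) (B : R) (N : nat) : R :=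
  match last_index (P N) N with Some j => step j | None => B end.

Lemma selected_rate_cv (P : nat -> nat -> Prop) B :
  (forall j, eventually (fun N => P N j)) -> Un_cv (selected_rate P B) 0.
Proof.
  intros Hev e He.
  destruct (archimed_cor1 e He) as [n [Hn Hn0]].
  destruct (Hev n) as [N1 HN1].
  exists (Nat.max N1 n). intros N HN. unfold selected_rate.
  destruct (last_index_max (P N) N n) as [j' [Hb Hj]]; [apply HN1; lia | lia |].
  rewrite Hb. unfold R_dist. rewrite Rminus_0_r.
  assert (INR n <= INR j') by (apply le_INR; exact Hj).
  assert (0 < INR n) by (apply lt_0_INR; exact Hn0).
  rewrite Rabs_pos_eq by (left; apply step_pos).
  eapply Rle_lt_trans; [|exact Hn]. unfold step. apply Rinv_le_contravar; lra.
Qed.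

Lemma selected_eventually (P : nat -> nat -> Prop) :
  eventually (fun N => P N O) ->
  eventually (fun N => exists j, last_index (P N) N = Some j).
Proof.
  intros [N0 HN0]. exists N0. intros N HN.
  destruct (last_index_max (P N) N O) as [j [Hj _]]; [apply HN0; exact HN | lia |].
  eauto.
Qed.

Section Corollary.
Variables (G : R -> R) (a C : R) (eps : nat -> R).
Hypothesis G_mono : forall x y, x <= y -> G x <= G y.
Hypothesis a_nonneg : 0 <= a.
Hypothesis G_zero : forall x, x <= a -> G x = 0.
Hypothesis eps_rate : forall N : nat, (1 <= N)%nat -> eps N <= C * Rpower (INR N) (- (1 / 6)).

Lemma eps_eventually_below K : 0 < K -> eventually (fun N => eps N < K).
Proof.
  intros HK. destruct (eventually_power_small C (1 / 6) K ltac:(lra) HK) as [N1 HN1].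
  exists (Nat.max N1 1). intros N HN.
  eapply Rle_lt_trans; [apply eps_rate; lia | apply HN1; lia].
Qed.

Lemma G_nonneg : forall x, 0 <= x -> 0 <= G x.
Proof. exact (vanishing_mono_nonneg G a a_nonneg G_mono G_zero). Qed.

Lemma increments_eventually_exceed X0 h :
  (exists m, 0 < m /\ forall p, a < p -> p + h <= X0 -> m <= G (p + h) - G p) ->
  eventually (fun N => increment_exceeds G a X0 h (eps N)).
Proof.
  intros [m [Hm Hinc]]. destruct (eps_eventually_below m Hm) as [N1 HN1].
  exists N1. intros N HN p Hp HpX. specialize (HN1 N HN). specialize (Hinc p Hp HpX). lra.
Qed.

Section BoundedSupport.
Variables (g : R -> R) (b : R).
Hypothesis a_lt_b : a < b.
Hypothesis G_one : forall x, b <= x -> G x = 1.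
Hypothesis g_pos : forall x, a < x -> x < b -> 0 < g x /\ continuity_pt g x.
Hypothesis G_dominates : forall x y, a < x -> x <= y -> y < b ->
  exists pr : Riemann_integrable g x y, RiemannInt pr <= G y - G x.

Definition bounded_good (N j : nat) : Prop := increment_exceeds G a b (step j / 2) (eps N).

(* G is strictly increasing on (a, b], so every mesh index is eventually
   admissible. *)
Lemma bounded_good_eventually j : eventually (fun N => bounded_good N j).
Proof.
  apply increments_eventually_exceed, (uniform_increase G a b G_mono);
    [| assert (H := step_pos j); lra].
  intros x y Hx Hxy Hy.
  apply (density_strict_increase G g a (fun z => z < b)); auto.
  intros z Hz; lra.
Qed.

(* With r_N the selected mesh (or b if none), both inverses exist on [0,1]
   and differ by at most r_N. *)
Lemma bounded_support_case :
  exists r : nat -> R, Un_cv r 0 /\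
    forall (N : nat) (H : R -> R), on_event G H a (Some b) (eps N) ->
      forall u, 0 <= u <= 1 ->
        exists y z, is_ginv G u y /\ is_ginv H u z /\ Rabs (z - y) <= r N.
Proof.
  exists (selected_rate bounded_good b).
  split; [apply selected_rate_cv, bounded_good_eventually|].
  intros N H [[Hm _] [Hz [H_one Hd]]] u Hu.
  assert (Hnn := vanishing_mono_nonneg H a a_nonneg Hm Hz).
  destruct (Req_dec u 0) as [->|Hu0].
  { exists 0, 0. rewrite !ginv_at_zero by (exact G_nonneg || exact Hnn).
    split; [reflexivity|]. split; [reflexivity|].
    rewrite Rminus_0_r, Rabs_R0. unfold selected_rate.
    destruct (last_index (bounded_good N) N); [left; apply step_pos | lra]. }
  destruct (ginv_between G u 0 b) as [y [Hy [Hy0 Hyb]]]; [lra | rewrite G_one; lra | auto|].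
  exists y. unfold selected_rate.
  destruct (last_index (bounded_good N) N) as [j|] eqn:E.
  - (* H reaches u at y + d, or anyway at b where H = 1. *)
    assert (Hinc := last_index_sound _ _ _ E).
    set (w := Rmin (y + step j) b).
    assert (Hw : u <= H w).
    { unfold w, Rmin. destruct (Rle_dec (y + step j) b) as [Hl|Hl].
      - apply (ginv_upper G H a (eps N) G_mono G_zero Hd u y _ b); auto; [lra | apply step_pos].
      - rewrite H_one; lra. }
    assert (Hw0 : 0 <= w) by (unfold w; apply Rmin_glb; assert (H1 := step_pos j); lra).
    destruct (ginv_close G H a (eps N) Hz Hd u y (step j) b w ltac:(lra) Hy (step_pos j)
                Hinc Hyb Hw0 Hw (Rmin_l _ _)) as [z Hz'].
    exists z; split; [exact Hy | exact Hz'].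
  - destruct (ginv_between H u 0 b) as [z [Hz' Hzb]]; [lra | rewrite H_one; lra | auto|].
    exists z. split; [exact Hy|]. split; [exact Hz'|]. apply Rabs_le; lra.
Qed.

End BoundedSupport.

Section UnboundedSupport.
Variables (g : R -> R) (x0 k gam : R).
Hypothesis g_pos : forall x, a < x -> 0 < g x /\ continuity_pt g x.
Hypothesis G_dominates : forall x y, a < x -> x <= y ->
  exists pr : Riemann_integrable g x y, RiemannInt pr <= G y - G x.
Hypothesis a_lt_x0 : a < x0.
Hypothesis k_pos : 0 < k.
Hypothesis gam_gt_3 : 3 < gam.
Hypothesis g_tail : forall x, x0 <= x -> k * Rpower x (- gam) <= g x.

Definition alpha : R := 1 / (12 * gam).

Definition range (N : nat) : R := Rpower (INR N) alpha + 1.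

Definition unbounded_good (N j : nat) : Prop :=
  increment_exceeds G a (range N) (step j / 2) (eps N).

(* Below x0 + 1 use the compactness bound; beyond x0 the tail bound, whose
   size k (h/2) (N^alpha + 1)^(-gamma) eventually dominates eps N. *)
Lemma unbounded_good_eventually j : eventually (fun N => unbounded_good N j).
Proof.
  set (h := step j / 2).
  assert (Hh : 0 < h <= 1 / 2) by (assert (H1 := step_pos j); assert (H2 := step_le_1 j); unfold h; lra).
  assert (Hcore : eventually (fun N => increment_exceeds G a (x0 + 1) h (eps N))).
  { apply increments_eventually_exceed, (uniform_increase G a (x0 + 1) G_mono); [|lra].
    intros x y Hx Hxy _. apply (density_strict_increase G g a (fun _ => True)); auto. }
  destruct Hcore as [N1 HN1].
  destruct (power_decay_dominates C (k * h) gam ltac:(nra) ltac:(lra)) as [N2 HN2].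
  exists (Nat.max (Nat.max N1 N2) 1). intros N HN p Hp HpX. fold h in HpX |- *.
  destruct (Rlt_le_dec p x0) as [Hpx|Hpx].
  - apply HN1; [lia | assumption | lra].
  - assert (Htail : k * Rpower (range N) (- gam) * h <= G (p + h) - G p).
    { apply (power_tail_increment G g x0 k gam p h (range N)); try lra; [exact g_tail|].
      apply G_dominates; lra. }
    assert (eps N < k * h * Rpower (range N) (- gam)).
    { eapply Rle_lt_trans; [apply eps_rate; lia | apply HN2; lia]. }
    lra.
Qed.

(* With x_N = N^alpha (or -1 while no mesh index is admissible) and r_N the
   selected mesh, H^{-1}(u) is within r_N of G^{-1}(u) <= x_N. *)
Lemma unbounded_support_case :
  exists alpha : R, 0 < alpha /\
  exists x : nat -> R,
    (exists c (N0 : nat), 0 < c /\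
       forall N : nat, (N0 <= N)%nat -> c <= Rpower (INR N) (- alpha) * x N) /\
  exists r : nat -> R, Un_cv r 0 /\
    forall (N : nat) (H : R -> R), on_event G H a None (eps N) ->
      forall u y, 0 <= u <= 1 -> is_ginv G u y -> y <= x N ->
        exists z, is_ginv H u z /\ Rabs (z - y) <= r N.
Proof.
  exists alpha. split; [unfold alpha; apply Rdiv_lt_0_compat; lra|].
  exists (fun N => match last_index (unbounded_good N) N with
                   | Some _ => Rpower (INR N) alpha | None => -1 end).
  split.
  { destruct (selected_eventually unbounded_good (unbounded_good_eventually O)) as [N0 HN0].
    exists 1, (Nat.max N0 1). split; [lra|]. intros N HN.
    destruct (HN0 N ltac:(lia)) as [j Hj]. rewrite Hj, <- Rpower_plus.
    replace (- alpha + alpha) with 0 by ring.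
    rewrite Rpower_O; [lra | apply lt_0_INR; lia]. }
  exists (selected_rate unbounded_good 0).
  split; [apply selected_rate_cv, unbounded_good_eventually|].
  intros N H [[Hm _] [Hz [_ Hd]]] u y Hu Hy HyN.
  assert (Hnn := vanishing_mono_nonneg H a a_nonneg Hm Hz).
  assert (y0 := ginv_nonneg _ _ _ Hy).
  unfold selected_rate. destruct (last_index (unbounded_good N) N) as [j|] eqn:E; [|lra].
  assert (Hinc := last_index_sound _ _ _ E).
  assert (Hd0 := step_pos j). assert (Hd1 := step_le_1 j).
  destruct (Req_dec u 0) as [->|Hu0].
  { exists 0. rewrite ginv_at_zero by assumption.
    rewrite ginv_at_zero in Hy by exact G_nonneg. subst y.
    split; [reflexivity|]. rewrite Rminus_0_r, Rabs_R0. lra. }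
  assert (HyX : y + step j <= range N) by (unfold range; lra).
  apply (ginv_close G H a (eps N) Hz Hd u y (step j) (range N) (y + step j));
    auto; try lra.
  apply (ginv_upper G H a (eps N) G_mono G_zero Hd u y _ (range N)); auto; lra.
Qed.

End UnboundedSupport.

End Corollary.

Theorem corollary2p3 (G : R -> R) (a : R) (b : option R) (eps : nat -> R) :
  Assumption2 G a b ->
  (exists C, forall N : nat, (1 <= N)%nat ->
       eps N <= C * Rpower (INR N) (- (1 / 6))) ->
  match b with
  | Some _ =>
      exists r : nat -> R, Un_cv r 0 /\
        forall (N : nat) (H : R -> R), on_event G H a b (eps N) ->
          forall u, 0 <= u <= 1 ->
            exists y z, is_ginv G u y /\ is_ginv H u z /\ Rabs (z - y) <= r N
  | None =>
      exists alpha : R, 0 < alpha /\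
      exists x : nat -> R,
        (exists c (N0 : nat), 0 < c /\
           forall N : nat, (N0 <= N)%nat -> c <= Rpower (INR N) (- alpha) * x N) /\
      exists r : nat -> R, Un_cv r 0 /\
        forall (N : nat) (H : R -> R), on_event G H a b (eps N) ->
          forall u y, 0 <= u <= 1 -> is_ginv G u y -> y <= x N ->
            exists z, is_ginv H u z /\ Rabs (z - y) <= r N
  end.
Proof.
  intros HA [C HC].
  destruct HA as [[[Gm _] _] [_ [_ [Ha [Gz [Hb [g [Hg_pos [Hg_dom Hg_tail]]]]]]]]].
  destruct b as [b|].
  - destruct Hb as [Hab G_one].
    exact (bounded_support_case G a C eps Gm Ha Gz HC g b Hab G_one Hg_pos Hg_dom).
  - destruct Hg_tail as [x0 [k [gam [Hx0 [Hk [Hgam Htail]]]]]].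
    exact (unbounded_support_case G a C eps Gm Ha Gz HC g x0 k gam
             (fun x Hx => Hg_pos x Hx I) (fun x y Hx Hxy => Hg_dom x y Hx Hxy I)
             Hx0 Hk Hgam Htail).
Qed.
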